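(* For every regular language $L\subseteq\Sigma^*$, there is an isomorphism of $\mathbf{JSL}$-dfas $\mathcal{P}(\mathrm{minDfa}(L^r))\cong[\mathrm{BLQ}(L)]^{\mathsf{op}}$ given by \[\{w_1^{-1}L^r,\ldots,w_n^{-1}L^r\}\mapsto\bigcap_{i=1}^n\overline{\mathrm{At}(w_i^r)},\] where $\mathrm{At}(x)$ is the unique atom of the boolean algebra $\mathrm{BLQ}(L)$ containing the word $x$.
   Context: $u^{-1}L=\{w:uw\in L\}$; $w^r$ is the reversal of $w$ and $L^r=\{w^r:w\in L\}$; $\overline{K}=\Sigma^*\setminus K$. $\mathrm{BLQ}(L)$ is the boolean subalgebra of $\mathcal{P}(\Sigma^* )$ generated by all left derivatives $u^{-1}L$ (finite when $L$ is regular), viewed as a $\mathbf{JSL}$-dfa with order $\subseteq$, transitions $K\mapsto a^{-1}K$, initial state $L$, final states the $K$ with $\epsilon\in K$. The minimal dfa $\mathrm{minDfa}(L^r)$ has states $\{v^{-1}L^r:v\in\Sigma^*\}$, transitions $K\mapsto a^{-1}K$, initial state $L^r$, final states those containing $\epsilon$. For a (deterministic or nondeterministic) finite automaton $N$ with state set $Q$, $\mathcal{P}(N)$ is the $\mathbf{JSL}$-dfa with states $(\mathcal{P}(Q),\cup)$, transitions $X\mapsto\delta_a[X]$, initial state the set of initial states, final states the subsets meeting the final states. A $\mathbf{JSL}$-dfa is a finite semilattice with join-preserving transitions $\delta_a$, an initial state $s_0$ and final states $\{s:s\not\le s_f\}$ for some $s_f$; morphisms are join-preserving maps preserving transitions,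 initial and final states (both ways). The dual $A^{\mathsf{op}}$ has the reversed order, transitions $\delta^*_a(s)=$ largest $t$ with $\delta_a(t)\le s$, initial state the largest non-final state of $A$, final states $\{s:s_0\not\le s\}$. *)

From Stdlib Require Import ClassicalEpsilon FunctionalExtensionality.
From mathcomp Require Import all_boot.

Set Implicit Arguments.
Unset Strict Implicit.
Unset Printing Implicit Defensive.

Section Langs.
Variable S : finType.

Definition lang := seq S -> Prop.

Definition leftq (u : seq S) (K : lang) : lang := fun w => K (u ++ w).

Definition rev_lang (K : lang) : lang := fun w => K (rev w).

Definition compl (K : lang) : lang := fun w => ~ K w.

Definition regular (L : lang) : Prop :=
  exists (Q : finType) (d : Q -> S -> Q) (q0 : Q) (F : pred Q),
    forall w, L w <-> F (foldl d q0 w).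

Inductive BLQ (L : lang) : lang -> Prop :=
| BLQ_der (u : seq S) : BLQ L (leftq u L)
| BLQ_top : BLQ L (fun _ => True)
| BLQ_compl K : BLQ L K -> BLQ L (compl K)
| BLQ_cap K1 K2 : BLQ L K1 -> BLQ L K2 -> BLQ L (fun w => K1 w /\ K2 w).

Definition atom (L : lang) (K : lang) : Prop :=
  [/\ BLQ L K, exists x, K x &
      forall K', BLQ L K' -> (forall x, K' x -> K x) -> (exists x, K' x) -> K' = K].

Definition At (L : lang) (x : seq S) : lang :=
  epsilon (inhabits (fun _ => False)) (fun K => atom L K /\ K x).

Lemma leftq_cons (a : S) (u : seq S) (K : lang) :
  leftq [:: a] (leftq u K) = leftq (rcons u a) K.
Proof.
apply: functional_extensionality => w; by rewrite /leftq cat_rcons.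
Qed.

Lemma BLQ_delta (L : lang) (a : S) (K : lang) :
  BLQ L K -> BLQ L (leftq [:: a] K).
Proof.
elim => [u| |K0 _ IH|K1 K2 _ IH1 _ IH2].
- rewrite leftq_cons; exact: BLQ_der.
- exact: BLQ_top.
- exact: BLQ_compl IH.
- exact: BLQ_cap IH1 IH2.
Qed.

End Langs.

Record jsl_dfa (S : Type) : Type := JSLDfa {
  jst : Type;
  jle : jst -> jst -> Prop;
  jdelta : S -> jst -> jst;
  jinit : jst;
  jfin : jst -> Prop }.

Definition is_lub (T : Type) (le : T -> T -> Prop) (x y z : T) : Prop :=
  [/\ le x z, le y z & forall t, le x t -> le y t -> le z t].

Definition is_bot (T : Type) (le : T -> T -> Prop) (b : T) : Prop :=
  forall t, le b t.

Definition jsl_morph (S : Type) (A B : jsl_dfa S) (f : jst A -> jst B) : Prop :=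
  [/\ (forall x y z, is_lub (@jle S A) x y z -> is_lub (@jle S B) (f x) (f y) (f z)),
      (forall b, is_bot (@jle S A) b -> is_bot (@jle S B) (f b)),
      (forall a s, f (@jdelta S A a s) = @jdelta S B a (f s)),
      f (@jinit S A) = @jinit S B &
      (forall s, @jfin S A s <-> @jfin S B (f s))].

Definition jsl_iso (S : Type) (A B : jsl_dfa S) (f : jst A -> jst B) : Prop :=
  jsl_morph f /\
  exists g : jst B -> jst A,
    [/\ jsl_morph g, (forall s, g (f s) = s) & (forall t, f (g t) = t)].

Definition jsl_op (S : Type) (A : jsl_dfa S) : jsl_dfa S :=
  @JSLDfa S (jst A)
    (fun x y => @jle S A y x)
    (fun a s => epsilon (inhabits s)
       (fun t => @jle S A (@jdelta S A a t) s /\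
                 forall t', @jle S A (@jdelta S A a t') s -> @jle S A t' t))
    (epsilon (inhabits (@jinit S A))
       (fun t => ~ @jfin S A t /\ forall t', ~ @jfin S A t' -> @jle S A t' t))
    (fun s => ~ @jle S A (@jinit S A) s).

Definition pow_dfa (S Q : Type) (d : S -> Q -> Q) (q0 : Q) (F : Q -> Prop)
  : jsl_dfa S :=
  @JSLDfa S (Q -> Prop)
    (fun X Y => forall q, X q -> Y q)
    (fun a X => fun q => exists p, X p /\ q = d a p)
    (fun q => q = q0)
    (fun X => exists q, X q /\ F q).

Section MinDfa.
Variable S : finType.
Variable L : lang S.

(* states of minDfa(L^r): the languages v^{-1} L^r *)
Definition mstate := {K : lang S | exists v, K = leftq v (rev_lang L)}.

Lemma mstate_delta_proof (a : S) (K : mstate) :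
  exists v, leftq [:: a] (sval K) = leftq v (rev_lang L).
Proof.
case: K => K [v Hv] /=; exists (rcons v a); rewrite Hv; exact: leftq_cons.
Qed.

Definition mdelta (a : S) (K : mstate) : mstate :=
  exist _ (leftq [:: a] (sval K)) (mstate_delta_proof a K).

Definition minit : mstate :=
  exist _ (rev_lang L) (ex_intro _ [::] erefl).

Definition mfinal (K : mstate) : Prop := sval K [::].

Definition pow_minDfa_rev : jsl_dfa S := pow_dfa mdelta minit mfinal.

Definition blq_state := {K : lang S | BLQ L K}.

Definition blq_delta (a : S) (K : blq_state) : blq_state :=
  exist _ (leftq [:: a] (sval K)) (BLQ_delta a (proj2_sig K)).

Definition blq_init : blq_state := exist _ L (BLQ_der L [::]).

Definition blq_dfa : jsl_dfa S :=
  @JSLDfa S blq_state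
    (fun K K' => forall w, sval K w -> sval K' w)
    blq_delta blq_init
    (fun K => sval K [::]).

Definition phi_map (X : mstate -> Prop) : lang S :=
  fun x => forall K : mstate, X K ->
           forall w, sval K = leftq w (rev_lang L) -> compl (At L (rev w)) x.

End MinDfa.

(* The proof is organised around the left-context equivalence of L,
     x ~ y  iff  for every u, (u x \in L <-> u y \in L).
   1. Every member of BLQ(L) is ~-saturated (a union of ~-classes), by induction
      on BLQ.  When L is regular, ~ has finite index (it is refined by the
      behaviour of a word from each state of a dfa for L), so conversely every
      ~-saturated language lies in BLQ(L): BLQ(L) is the algebra of saturated
      languages, its atoms are the ~-classes, and At(x) is the class of x.
   2. On the other side, w^{-1}L^r = w'^{-1}L^r iff w^r ~ w'^r, so the states of
      minDfa(L^r) are in bijection with the ~-classes; mrep picks a word in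
      the class of each state.
   3. Hence the map X |-> the complement of the union of the classes of X is a
      bijection from subsets of states onto BLQ(L) which reverses inclusion.
      It commutes with transitions, initial and final states, where on BLQ(L)^op
      these are described by greatest elements; an order isomorphism with
      these properties is a JSL-dfa isomorphism. *)

From mathcomp Require Import all_boot.
From Stdlib Require Import ClassicalEpsilon FunctionalExtensionality.
From Stdlib Require Import PropExtensionality ProofIrrelevance Classical.

Set Implicit Arguments.
Unset Strict Implicit.
Unset Printing Implicit Defensive.

Lemma lang_ext (T : Type) (K K' : T -> Prop) : (forall w, K w <-> K' w) -> K = K'.
Proof.
move=> KK'; apply: functional_extensionality => w.
exact: propositional_extensionality.
Qed.

Lemma sig_ext (T : Type) (P : T -> Prop) (s t : {x | P x}) : sval s = sval t -> s = t.
Proof. by case: s => x px; case: t => y py /= xy; apply: subset_eq_compat. Qed.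

(* In an antisymmetric order, the Hilbert choice of "a greatest element
   satisfying P" is the greatest element, whenever one exists; this is how the
   transitions and initial state of a dual JSL-dfa are computed. *)
Lemma epsilon_greatest (T : Type) (le : T -> T -> Prop) (P : T -> Prop)
    (i : inhabited T) (t : T) :
  (forall x y, le x y -> le y x -> x = y) ->
  P t -> (forall t', P t' -> le t' t) ->
  epsilon i (fun t => P t /\ forall t', P t' -> le t' t) = t.
Proof.
move=> antisym Pt tmax.
have [Pe emax] := epsilon_spec i (fun t => P t /\ forall t', P t' -> le t' t)
  (ex_intro _ t (conj Pt tmax)).
by apply: antisym; [apply: tmax | apply: emax].
Qed.

Lemma order_embedding_joins (T U : Type) (leT : T -> T -> Prop) (leU : U -> U -> Prop)
    (h : T -> U) (h' : U -> T) :
  (forall u, h (h' u) = u) -> (forall x y, leT x y <-> leU (h x) (h y)) ->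
  (forall x y z, is_lub leT x y z -> is_lub leU (h x) (h y) (h z)) /\
  (forall b, is_bot leT b -> is_bot leU (h b)).
Proof.
move=> hh' h_le; split.
- move=> x y z [xz yz zmin]; split; [exact/h_le | exact/h_le |].
  move=> u xu yu; rewrite -[u]hh'; apply/h_le.
  by apply: zmin; apply/h_le; rewrite hh'.
- by move=> b bot u; rewrite -[u]hh'; apply/h_le.
Qed.

Lemma jsl_iso_of_order_iso (S : Type) (A B : jsl_dfa S)
    (f : jst A -> jst B) (g : jst B -> jst A) :
  (forall s, g (f s) = s) -> (forall t, f (g t) = t) ->
  (forall x y, jle x y <-> jle (f x) (f y)) ->
  (forall a s, f (jdelta a s) = jdelta a (f s)) -> f (jinit A) = jinit B ->
  (forall s, jfin s <-> jfin (f s)) -> jsl_iso f.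
Proof.
move=> gf fg f_le f_delta f_init f_fin.
have g_le x y : @jle S B x y <-> jle (g x) (g y).
  have := f_le (g x) (g y); rewrite !fg; exact: iff_sym.
have [f_lub f_bot] := order_embedding_joins fg f_le.
have [g_lub g_bot] := order_embedding_joins gf g_le.
split; first by split.
exists g; split => //; split => //.
- by move=> a t; rewrite -{1}[t]fg -f_delta gf.
- by rewrite -f_init gf.
- by move=> t; have := f_fin (g t); rewrite fg; apply: iff_sym.
Qed.

Section ContextEquivalence.
Variables (S : finType) (L : lang S).

Definition ctxeq (x y : seq S) : Prop := forall u, L (u ++ x) <-> L (u ++ y).

Lemma ctxeq_refl x : ctxeq x x.
Proof. by []. Qed.

Lemma ctxeq_sym x y : ctxeq x y -> ctxeq y x.
Proof. by move=> xy u; apply: iff_sym. Qed.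

Lemma ctxeq_trans x y z : ctxeq x y -> ctxeq y z -> ctxeq x z.
Proof. by move=> xy yz u; apply: iff_trans (xy u) (yz u). Qed.

Lemma ctxeq_cons a x y : ctxeq x y -> ctxeq (a :: x) (a :: y).
Proof. by move=> xy u; rewrite -!cat_rcons. Qed.

Definition cls (x : seq S) : lang S := fun y => ctxeq y x.

Lemma cls_eq x y : ctxeq x y -> cls x = cls y.
Proof.
move=> xy; apply: lang_ext => z.
by split => zc; [apply: ctxeq_trans xy | apply: ctxeq_trans (ctxeq_sym xy)].
Qed.

Definition sat (K : lang S) : Prop := forall x y, ctxeq x y -> K x -> K y.

Lemma BLQ_sat K : BLQ L K -> sat K.
Proof.
elim => [u| |K0 _ satK0|K1 K2 _ satK1 _ satK2] x y xy.
- exact: (proj1 (xy u)).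
- by [].
- by move=> nK0x K0y; apply: nK0x; apply: satK0 K0y; apply: ctxeq_sym.
- by move=> [/(satK1 _ _ xy) K1y /(satK2 _ _ xy) K2y].
Qed.

Lemma cls_sat x : sat (cls x).
Proof. by move=> y z yz yx; apply: ctxeq_trans (ctxeq_sym yz) yx. Qed.

Lemma BLQ_ext K K' : BLQ L K -> (forall w, K w <-> K' w) -> BLQ L K'.
Proof. by move=> BK /lang_ext <-. Qed.

Lemma BLQ_empty : BLQ L (fun _ => False).
Proof. by apply: BLQ_ext (BLQ_compl (BLQ_top L)) _ => w; split => // /(_ I). Qed.

Lemma BLQ_union K1 K2 : BLQ L K1 -> BLQ L K2 -> BLQ L (fun w => K1 w \/ K2 w).
Proof.
move=> B1 B2; apply: BLQ_ext (BLQ_compl (BLQ_cap (BLQ_compl B1) (BLQ_compl B2))) _.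
move=> w; rewrite /compl; split; last by move=> [K1w|K2w] [].
by move=> neither; apply: NNPP => none; apply: neither; split => Kw; apply: none; [left|right].
Qed.

Lemma BLQ_bigcap (I : eqType) (G : I -> lang S) (s : seq I) :
  (forall i, BLQ L (G i)) -> BLQ L (fun y => forall i, i \in s -> G i y).
Proof.
move=> BG; elim: s => [|a s IH]; first by apply: BLQ_ext (BLQ_top L) _.
apply: BLQ_ext (BLQ_cap (BG a) IH) _ => w; split.
  by move=> [Ga Gs] i; rewrite in_cons => /orP [/eqP -> //|]; apply: Gs.
move=> Gall; split; first by apply: Gall; rewrite mem_head.
by move=> i si; apply: Gall; rewrite in_cons si orbT.
Qed.

Lemma BLQ_bigcup (I : eqType) (G : I -> lang S) (s : seq I) :
  (forall i, BLQ L (G i)) -> BLQ L (fun y => exists2 i, i \in s & G i y).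
Proof.
move=> BG; elim: s => [|a s IH]; first by apply: BLQ_ext BLQ_empty _ => w; split => // [[]].
apply: BLQ_ext (BLQ_union (BG a) IH) _ => w; split.
  by move=> [Ga|[i si Gi]]; [exists a; rewrite ?mem_head | exists i; rewrite ?in_cons ?si ?orbT].
by move=> [i]; rewrite in_cons => /orP [/eqP -> Ga|si Gi]; [left | right; exists i].
Qed.

End ContextEquivalence.

Section FiniteIndex.
Variables (S : finType) (L : lang S).
Variables (Q : finType) (d : Q -> S -> Q) (q0 : Q) (F : pred Q).
Hypothesis accepts : forall w, L w <-> F (foldl d q0 w).

Lemma accepts_cat u x : L (u ++ x) <-> F (foldl d (foldl d q0 u) x).
Proof. by rewrite -foldl_cat. Qed.

Definition behaviour (x : seq S) : {ffun Q -> bool} := [ffun q => F (foldl d q x)].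

Lemma behaviour_ctxeq x y : behaviour x = behaviour y -> ctxeq L x y.
Proof.
move=> /ffunP /(_ (foldl d q0 _)) bxy u.
have := bxy u; rewrite !ffunE => Fxy.
apply: iff_trans (accepts_cat u x) _; rewrite Fxy; exact: iff_sym (accepts_cat u y).
Qed.

(* A word reaching q from q0, whenever q is reachable. *)
Definition reaching (q : Q) : seq S :=
  epsilon (inhabits [::]) (fun u => foldl d q0 u = q).

Lemma reaching_cat u y : L (reaching (foldl d q0 u) ++ y) <-> L (u ++ y).
Proof.
have reach : foldl d q0 (reaching (foldl d q0 u)) = foldl d q0 u.
  exact: (epsilon_spec _ (fun v => foldl d q0 v = foldl d q0 u) (ex_intro _ u erefl)).
apply: iff_trans (accepts_cat _ y) _; rewrite reach; exact: iff_sym (accepts_cat u y).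
Qed.

(* A class is the intersection, over the states q, of the (complemented)
   derivatives by the word reaching q. *)
Lemma cls_BLQ x : BLQ L (cls L x).
Proof.
pose agree q : lang S := fun y => L (reaching q ++ y) <-> L (reaching q ++ x).
have agree_BLQ q : BLQ L (agree q).
  case: (classic (L (reaching q ++ x))) => Lx.
    by apply: BLQ_ext (BLQ_der L (reaching q)) _ => y; rewrite /agree /leftq; tauto.
  by apply: BLQ_ext (BLQ_compl (BLQ_der L (reaching q))) _ => y; rewrite /agree /leftq /compl; tauto.
apply: BLQ_ext (BLQ_bigcap (enum Q) agree_BLQ) _ => y; split; last by move=> yx q _; apply: yx.
move=> agree_all u; have := agree_all (foldl d q0 u) (mem_enum _ _); rewrite /agree => Ayx.
apply: iff_trans (iff_sym (reaching_cat u y)) _; apply: iff_trans Ayx _; exact: reaching_cat.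
Qed.

(* A saturated language is the union of the finitely many classes it meets. *)
Lemma sat_BLQ K : sat L K -> BLQ L K.
Proof.
move=> satK.
pose part g : lang S := fun y => exists x, [/\ K x, behaviour x = g & ctxeq L y x].
have part_BLQ g : BLQ L (part g).
  case: (classic (exists x, K x /\ behaviour x = g)) => [[x [Kx <-]]|none].
    apply: BLQ_ext (cls_BLQ x) _ => y; split => [yx|[x' [_ bx' yx']]]; first by exists x.
    exact: ctxeq_trans yx' (behaviour_ctxeq bx').
  by apply: BLQ_ext (BLQ_empty L) _ => y; split => // [[x [Kx bx _]]]; apply: none; exists x.
apply: BLQ_ext (BLQ_bigcup (enum {ffun Q -> bool}) part_BLQ) _ => y; split.
  by move=> [g _ [x [Kx _ yx]]]; apply: satK Kx; apply: ctxeq_sym.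
by move=> Ky; exists (behaviour y); rewrite ?mem_enum //; exists y; split.
Qed.

End FiniteIndex.

Lemma regular_sat_BLQ (S : finType) (L : lang S) (K : lang S) :
  regular L -> sat L K -> BLQ L K.
Proof. by move=> [Q [d [q0 [F accepts]]]]; exact: (sat_BLQ accepts). Qed.

Section Atoms.
Variables (S : finType) (L : lang S).
Hypothesis Lreg : regular L.

Lemma cls_atom x : atom L (cls L x).
Proof.
split; first exact: regular_sat_BLQ Lreg (@cls_sat _ L x).
  by exists x.
move=> K' BK' sub [y K'y]; apply: lang_ext => z; split; first exact: sub.
move=> zx; exact: (BLQ_sat BK' (ctxeq_trans (sub y K'y) (ctxeq_sym zx)) K'y).
Qed.

Lemma atom_cls K x : atom L K -> K x -> K = cls L x.
Proof.
move=> [BK _ Kmin] Kx; apply: esym; apply: Kmin; last by exists x.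
- exact: regular_sat_BLQ Lreg (@cls_sat _ L x).
- by move=> z zx; apply: BLQ_sat BK _ _ (ctxeq_sym zx) Kx.
Qed.

Lemma At_cls x : At L x = cls L x.
Proof.
have [atomAt Atx] := epsilon_spec (inhabits (fun _ => False))
  (fun K => atom L K /\ K x) (ex_intro _ (cls L x) (conj (cls_atom x) (ctxeq_refl L x))).
exact: atom_cls atomAt Atx.
Qed.

End Atoms.

Section ReversedMinDfa.
Variables (S : finType) (L : lang S).

Lemma leftq_rev_ctxeq w w' :
  leftq w (rev_lang L) = leftq w' (rev_lang L) <-> ctxeq L (rev w) (rev w').
Proof.
split => [ww' u | ww'].
  have := congr1 (fun K : lang S => K (rev u)) ww'.
  by rewrite /leftq /rev_lang !rev_cat revK => ->.
by apply: lang_ext => z; rewrite /leftq /rev_lang !rev_cat; apply: ww'.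
Qed.

Definition mword (K : mstate L) : seq S :=
  epsilon (inhabits [::]) (fun w => sval K = leftq w (rev_lang L)).
Definition mrep (K : mstate L) : seq S := rev (mword K).

Lemma mwordP K : sval K = leftq (mword K) (rev_lang L).
Proof. exact: epsilon_spec (proj2_sig K). Qed.

Lemma mstate_ctxeq K w : sval K = leftq w (rev_lang L) <-> ctxeq L (rev w) (mrep K).
Proof.
rewrite mwordP; split => [/leftq_rev_ctxeq Kw | wK]; first exact: ctxeq_sym Kw.
by apply/leftq_rev_ctxeq; apply: ctxeq_sym.
Qed.

Lemma mrep_inj K K' : ctxeq L (mrep K) (mrep K') -> K = K'.
Proof. by move=> /leftq_rev_ctxeq KK'; apply: sig_ext; rewrite !mwordP. Qed.

Lemma mrep_delta a K : ctxeq L (mrep (mdelta a K)) (a :: mrep K).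
Proof.
apply: ctxeq_sym; rewrite /mrep -rev_rcons; apply/mstate_ctxeq.
by rewrite /= mwordP leftq_cons.
Qed.

Lemma mrep_init : ctxeq L (mrep (minit L)) [::].
Proof. by apply: ctxeq_sym; apply/(mstate_ctxeq (minit L) [::]). Qed.

Lemma mfinal_mrep K : mfinal K <-> L (mrep K).
Proof. by rewrite /mfinal mwordP /leftq /rev_lang cats0. Qed.

Definition mstate_of (x : seq S) : mstate L :=
  exist _ (leftq (rev x) (rev_lang L)) (ex_intro _ (rev x) erefl).

Lemma mrep_of x : ctxeq L x (mrep (mstate_of x)).
Proof. by have := proj1 (mstate_ctxeq (mstate_of x) (rev x)) erefl; rewrite revK. Qed.

End ReversedMinDfa.

Section TheIsomorphism.
Variables (S : finType) (L : lang S).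
Hypothesis Lreg : regular L.

Lemma phi_mrep (X : mstate L -> Prop) y :
  phi_map X y <-> forall K, X K -> ~ ctxeq L y (mrep K).
Proof.
rewrite /phi_map; split => phiXy K XK.
  by have := phiXy K XK (mword K) (mwordP K); rewrite /compl (At_cls Lreg).
move=> w /mstate_ctxeq wK; rewrite /compl (At_cls Lreg) => yw.
exact: phiXy K XK (ctxeq_trans yw wK).
Qed.

Lemma phi_sat (X : mstate L -> Prop) : sat L (phi_map X).
Proof.
move=> x y xy; rewrite !phi_mrep => phiXx K XK yK.
exact: phiXx K XK (ctxeq_trans xy yK).
Qed.

Definition phi_state (X : mstate L -> Prop) : blq_state L :=
  exist _ (phi_map X) (regular_sat_BLQ Lreg (@phi_sat X)).

Definition unphi (T : blq_state L) : mstate L -> Prop := fun K => ~ sval T (mrep K).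

Lemma blq_state_sat (T : blq_state L) : sat L (sval T).
Proof. exact: BLQ_sat (proj2_sig T). Qed.

Lemma blq_antisym (T T' : blq_state L) :
  (forall w, sval T w -> sval T' w) -> (forall w, sval T' w -> sval T w) -> T = T'.
Proof. by move=> TT' T'T; apply: sig_ext; apply: lang_ext => w; split => [/TT'|/T'T]. Qed.

Lemma phi_mrep_mem (X : mstate L -> Prop) K : ~ phi_map X (mrep K) <-> X K.
Proof.
rewrite phi_mrep; split => [notphi | XK]; last by move=> /(_ K XK); apply.
apply: NNPP => notXK; apply: notphi => K' XK' KK'.
by apply: notXK; rewrite (mrep_inj KK').
Qed.

Lemma unphi_phi X : unphi (phi_state X) = X.
Proof. by apply: lang_ext => K; apply: phi_mrep_mem. Qed.

Lemma phi_unphi T : phi_state (unphi T) = T.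
Proof.
apply: blq_antisym => w /=; rewrite phi_mrep.
- move=> notT; apply: NNPP => notTw; apply: (notT (mstate_of L w) _ (mrep_of L w)).
  by move=> Tw; apply: notTw; apply: blq_state_sat Tw; apply: ctxeq_sym; apply: mrep_of.
- by move=> Tw K notTK wK; apply: notTK; apply: blq_state_sat Tw.
Qed.

Lemma phi_le (X Y : mstate L -> Prop) :
  (forall K, X K -> Y K) <-> (forall w, phi_map Y w -> phi_map X w).
Proof.
split => [XY w | phiYX K].
  by rewrite !phi_mrep => phiYw K XK; apply: phiYw K (XY K XK).
by rewrite -!phi_mrep_mem => notphiX phiY; apply: notphiX; apply: phiYX.
Qed.

Lemma phi_delta a (X : jst (pow_minDfa_rev L)) :
  phi_state (jdelta a X) = @jdelta _ (jsl_op (blq_dfa L)) a (phi_state X).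
Proof.
apply: esym; apply: epsilon_greatest => [T T' |w /= | T aTphi y Ty /=].
- by apply: blq_antisym.
- rewrite /leftq /= !phi_mrep => phiaw K XK wK.
  apply: phiaw (mdelta a K) (ex_intro _ K (conj XK erefl)) _.
  exact: ctxeq_trans (ctxeq_cons a wK) (ctxeq_sym (mrep_delta a K)).
- rewrite phi_mrep => _ [K [XK ->]] yK.
  have Ta : sval T (a :: mrep K).
    by apply: blq_state_sat Ty; apply: ctxeq_trans yK (mrep_delta a K).
  by have := aTphi (mrep K) Ta; rewrite /= phi_mrep => /(_ K XK); apply.
Qed.

Lemma phi_init :
  phi_state (jinit (pow_minDfa_rev L)) = jinit (jsl_op (blq_dfa L)).
Proof.
apply: esym; apply: epsilon_greatest => [T T' | | T notTe y Ty /=].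
- by apply: blq_antisym.
- rewrite /= phi_mrep => /(_ (minit L) erefl); apply.
  exact: ctxeq_sym (mrep_init L).
- rewrite phi_mrep => K -> yK; apply: notTe; apply: blq_state_sat Ty.
  exact: ctxeq_trans yK (mrep_init L).
Qed.

Lemma phi_fin (X : jst (pow_minDfa_rev L)) :
  jfin X <-> @jfin _ (jsl_op (blq_dfa L)) (phi_state X).
Proof.
split => /= [[K [XK /mfinal_mrep LK]] Lphi | notLphi].
  by have := Lphi _ LK; rewrite phi_mrep => /(_ K XK); apply.
apply: NNPP => notfin; apply: notLphi => w Lw; rewrite phi_mrep => K XK wK.
apply: notfin; exists K; split => //; apply/mfinal_mrep.
exact: (proj1 (wK [::]) Lw).
Qed.

End TheIsomorphism.

Theorem proposition3p12 (S : finType) (L : lang S) :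
  regular L ->
  (forall w w' : seq S, leftq w (rev_lang L) = leftq w' (rev_lang L) ->
     At L (rev w) = At L (rev w')) /\
  exists f : jst (pow_minDfa_rev L) -> jst (jsl_op (blq_dfa L)),
    jsl_iso f /\
    forall X : mstate L -> Prop, sval (f X : blq_state L) = phi_map X.
Proof.
move=> Lreg; split.
  by move=> w w' /leftq_rev_ctxeq ww'; rewrite !At_cls //; apply: cls_eq.
exists (phi_state Lreg); split => //.
apply: (@jsl_iso_of_order_iso _ (pow_minDfa_rev L) (jsl_op (blq_dfa L)) _ (@unphi _ L)).
- exact: unphi_phi.
- exact: phi_unphi.
- by move=> X Y; apply: phi_le.
- exact: phi_delta.
- exact: phi_init.
- exact: phi_fin.
Qed.
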